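(* Let $K$ be an algebraically closed field of characteristic zero, $\deg_1$ the standard homogeneous degree on $K[x_1,\dots,x_n]$, $\Phi=(f_1,\dots,f_n)$ a polynomial automorphism of $K^n$, $d_i=\deg_1(f_i)$, and $\nabla=d_1+\dots+d_n-n$. Then for every $P\in K[x_1,\dots,x_n]$, $\deg_1(P\circ\Phi)\ge\deg_1(\frac{\partial P}{\partial x_n}\circ\Phi)+d_n-\nabla$, and more generally $\deg_1(P\circ\Phi)\ge\deg_1(\frac{\partial^kP}{\partial x_n^k}\circ\Phi)+kd_n-k\nabla$ for all $k\ge 0$. *)

From mathcomp Require Import all_boot all_order all_algebra.
From mathcomp Require Export mpoly.
Set Implicit Arguments. Unset Strict Implicit. Unset Printing Implicit Defensive.
Import GRing.Theory Num.Theory.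
Local Open Scope ring_scope.

(* Standard total (homogeneous) degree deg_1 of a nonzero polynomial:
   msize p = 1 + deg p for p <> 0. *)
Definition deg1 (n : nat) (R : ringType) (p : {mpoly R[n]}) : nat := (msize p).-1.

Definition poly_automorphism (n : nat) (K : comRingType)
  (Phi : n.-tuple {mpoly K[n]}) : Prop :=
  exists Psi : n.-tuple {mpoly K[n]},
    (forall i : 'I_n, (tnth Phi i) \mPo Psi = 'X_i) /\
    (forall i : 'I_n, (tnth Psi i) \mPo Phi = 'X_i).

From mathcomp Require Import all_boot all_order all_algebra.
From mathcomp Require Import mpoly ring zify.
Import GRing.Theory Num.Theory.
Local Open Scope ring_scope.
Set Implicit Arguments. Unset Strict Implicit. Unset Printing Implicit Defensive.

(* Write Q := P o Phi and J for the Jacobian matrix of Phi. By the chain rule,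
   the row (dP/dx_i o Phi)_i times J is the gradient of Q; multiplying by the
   adjugate of J and using that det J is a nonzero constant c (Phi is
   invertible), c * (dP/dx_n o Phi) = sum_j dQ/dx_j * adj(J)_(j,n). The entry
   adj(J)_(j,n) is a minor built from the derivatives of f_1, ..., f_(n-1),
   so it has degree at most sum_(i<n) (d_i - 1) = nabla - d_n + 1, whereas
   dQ/dx_j has degree at most deg Q - 1. This is the case k = 1; the general
   case follows by iterating it along P, dP/dx_n, d^2P/dx_n^2, ... *)

Lemma mderivXU (R : ringType) (n : nat) (i j : 'I_n) :
  ('X_i : {mpoly R[n]})^`M(j) = (i == j)%:R.
Proof.
rewrite mderivX mnm1E; case: eqP => [->|_]; last by rewrite scale0r.
have -> : (U_(j) - U_(j) = 0)%MM by apply/mnmP => l; rewrite !mnmE subnn.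
by rewrite mpolyX0 scale1r.
Qed.

Section ChainRule.
Variables (R : comRingType) (n k : nat) (lq : n.-tuple {mpoly R[k]}).

Local Definition chain_rule_at (p : {mpoly R[n]}) := forall j : 'I_k,
  (p \mPo lq)^`M(j) = \sum_(i < n) (p^`M(i) \mPo lq) * (tnth lq i)^`M(j).

Local Lemma chain_rule_at_lin c p q :
  chain_rule_at p -> chain_rule_at q -> chain_rule_at (c *: p + q).
Proof.
move=> hp hq j; rewrite raddfD /= comp_mpolyZ raddfD /= mderivZ hp hq.
rewrite scaler_sumr -big_split /=; apply: eq_bigr => i _.
by rewrite mderivD mderivZ comp_mpolyD comp_mpolyZ mulrDl scalerAl.
Qed.

Local Lemma chain_rule_atM p q :
  chain_rule_at p -> chain_rule_at q -> chain_rule_at (p * q).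
Proof.
move=> hp hq j; rewrite rmorphM /= mderivM hp hq mulr_suml mulr_sumr.
rewrite -big_split /=; apply: eq_bigr => i _.
by rewrite mderivM rmorphD /= !rmorphM /=; ring.
Qed.

Local Lemma chain_rule_at1 : chain_rule_at 1.
Proof.
move=> j; rewrite rmorph1 -mpolyC1 mderivC big1 // => i _.
by rewrite mderivC comp_mpolyC mpolyC0 mul0r.
Qed.

Local Lemma chain_rule_atX i : chain_rule_at 'X_i.
Proof.
move=> j; rewrite comp_mpolyXU -tnth_nth (bigD1 i) //= big1 => [|l neq_li].
  by rewrite mderivXU eqxx comp_mpoly1 mul1r addr0.
by rewrite mderivXU eq_sym (negbTE neq_li) comp_mpoly0 mul0r.
Qed.

Lemma mderiv_comp (p : {mpoly R[n]}) (j : 'I_k) :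
  (p \mPo lq)^`M(j) = \sum_(i < n) (p^`M(i) \mPo lq) * (tnth lq i)^`M(j).
Proof.
move: j; elim/mpolyind: p => [j|c m p _ _ hp].
  by rewrite !raddf0 big1 // => i _; rewrite mderiv0 comp_mpoly0 mul0r.
apply: chain_rule_at_lin => //; rewrite mpolyXE_id.
apply: (big_ind chain_rule_at); [exact: chain_rule_at1|exact: chain_rule_atM|].
move=> i _; elim: (m i) => [|e ih]; first by rewrite expr0; exact: chain_rule_at1.
by rewrite exprS; apply: chain_rule_atM => //; exact: chain_rule_atX.
Qed.

End ChainRule.

Lemma comp_mpolyA (R : comRingType) (n k l : nat) (p : {mpoly R[n]})
    (lq : n.-tuple {mpoly R[k]}) (lr : k.-tuple {mpoly R[l]}) :
  (p \mPo lq) \mPo lr = p \mPo [tuple tnth lq i \mPo lr | i < n].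
Proof.
rewrite (comp_mpolyE p lq) raddf_sum comp_mpolyE; apply: eq_bigr => m _ /=.
rewrite comp_mpolyZ rmorph_prod; congr (_ *: _); apply: eq_bigr => i _.
by rewrite rmorphXn tnth_mktuple.
Qed.

Lemma comp_mpolyK (R : comRingType) (n : nat) (Phi Psi : n.-tuple {mpoly R[n]}) :
  (forall i, tnth Psi i \mPo Phi = 'X_i) -> cancel (comp_mpoly Psi) (comp_mpoly Phi).
Proof.
move=> PsiPhi p; rewrite comp_mpolyA -[RHS]comp_mpoly_id; congr (p \mPo _).
by apply: eq_from_tnth => i; rewrite !tnth_mktuple PsiPhi.
Qed.

Section Degree.
Variables (R : idomainType) (n : nat).
Implicit Types p q : {mpoly R[n]}.

Lemma deg1M_le p q : (deg1 (p * q) <= deg1 p + deg1 q)%N.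
Proof.
have [->|p0] := eqVneq p 0; first by rewrite mul0r /deg1 msize0.
have [->|q0] := eqVneq q 0; first by rewrite mulr0 /deg1 msize0.
by rewrite /deg1 msizeM //; move: p0 q0; rewrite -!msize_poly_eq0; lia.
Qed.

Lemma deg1_prod_le I (r : seq I) (P : pred I) (F : I -> {mpoly R[n]}) :
  (deg1 (\prod_(i <- r | P i) F i) <= \sum_(i <- r | P i) deg1 (F i))%N.
Proof.
apply: (big_ind2 (fun p a => deg1 p <= a)%N) => [|p a q b hp hq|//].
  by rewrite /deg1 msize1.
exact: leq_trans (deg1M_le p q) (leq_add hp hq).
Qed.

Lemma deg1_sum_le I (r : seq I) (P : pred I) (F : I -> {mpoly R[n]}) D :
  (forall i, P i -> deg1 (F i) <= D)%N -> (deg1 (\sum_(i <- r | P i) F i) <= D)%N.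
Proof.
move=> FD; apply: (big_ind (fun p => deg1 p <= D)%N) => //; first by rewrite /deg1 msize0.
by move=> p q; rewrite /deg1 => hp hq; have := msizeD_le p q; lia.
Qed.

Lemma deg1_signr (b : bool) p : deg1 ((-1) ^+ b * p) = deg1 p.
Proof. by case: b; rewrite ?expr1 ?expr0 ?mulN1r ?mul1r // /deg1 msizeN. Qed.

Lemma deg1_mulC c p : c != 0 -> deg1 (c%:MP * p) = deg1 p.
Proof. by move=> c0; rewrite /deg1 mul_mpolyC msizeZ. Qed.

Lemma msize_mderiv p i : (msize p^`M(i) <= (msize p).-1)%N.
Proof.
rewrite [X in (X <= _)%N]msizeE; apply/bigmax_leqP_seq => m.
rewrite mcoeff_msupp mcoeff_deriv => m_supp _.
have : (m + U_(i))%MM \in msupp p.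
  by rewrite mcoeff_msupp; apply: contraNneq m_supp => ->; rewrite mul0rn.
by move/msize_mdeg_lt; rewrite mdegD mdeg1 addn1; case: (msize p).
Qed.

Lemma deg1_mderiv p i : (deg1 p^`M(i) <= (deg1 p).-1)%N.
Proof.
have := msize_mderiv p i; rewrite /deg1.
by move: (msize p) (msize p^`M(i)) => a b; lia.
Qed.

Lemma deg1_eq0_mderiv p i : deg1 p = 0%N -> p^`M(i) = 0.
Proof.
move=> p0; apply/eqP; rewrite -msize_poly_eq0.
have := msize_mderiv p i; move: p0; rewrite /deg1.
by move: (msize p) (msize p^`M(i)) => a b; lia.
Qed.

End Degree.

Section Jacobian.
Variable R : comRingType.

Definition jacobian (n k : nat) (lq : n.-tuple {mpoly R[k]}) : 'M[{mpoly R[k]}]_(n, k) :=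
  \matrix_(i, j) (tnth lq i)^`M(j).

Lemma jacobian_comp (n m k : nat)
    (lq : n.-tuple {mpoly R[m]}) (lr : m.-tuple {mpoly R[k]}) :
  map_mx (comp_mpoly lr) (jacobian lq) *m jacobian lr
  = jacobian [tuple tnth lq i \mPo lr | i < n].
Proof.
apply/matrixP => i j; rewrite !mxE tnth_mktuple mderiv_comp.
by apply: eq_bigr => l _; rewrite !mxE.
Qed.

Lemma jacobian_id (n : nat) : jacobian [tuple ('X_i : {mpoly R[n]}) | i < n] = 1%:M.
Proof. by apply/matrixP => i j; rewrite !mxE tnth_mktuple mderivXU. Qed.

Lemma det_jacobian_mul_mderiv_comp (n : nat) (Phi : n.-tuple {mpoly R[n]})
    (P : {mpoly R[n]}) (l : 'I_n) :
  \det (jacobian Phi) * (P^`M(l) \mPo Phi)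
  = \sum_j (P \mPo Phi)^`M(j) * \adj (jacobian Phi) j l.
Proof.
pose v := \row_i (P^`M(i) \mPo Phi).
have grad_comp : v *m jacobian Phi = \row_j (P \mPo Phi)^`M(j).
  apply/matrixP => i j; rewrite !mxE mderiv_comp.
  by apply: eq_bigr => t _; rewrite !mxE.
have := congr1 (fun M : 'rV[{mpoly R[n]}]_n => M 0 l)
  (mulmxA v (jacobian Phi) (\adj (jacobian Phi))).
rewrite /= mul_mx_adj mul_mx_scalar grad_comp !mxE => ->.
by apply: eq_bigr => j _; rewrite mxE.
Qed.

End Jacobian.

Lemma mpoly_mul_eq1 (R : idomainType) (n : nat) (p q : {mpoly R[n]}) :
  p * q = 1 -> exists2 c, c != 0 & p = c%:MP.
Proof.
move=> pq1; apply/msize_poly1P.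
have p0 : p != 0 by apply: contra_eq_neq pq1 => ->; rewrite mul0r eq_sym oner_neq0.
have q0 : q != 0 by apply: contra_eq_neq pq1 => ->; rewrite mulr0 eq_sym oner_neq0.
have := congr1 (fun r => msize r) pq1; rewrite msizeM // msize1.
by move: p0 q0; rewrite -!msize_poly_eq0; move: (msize p) (msize q) => a b; lia.
Qed.

Section Automorphism.
Variables (K : idomainType) (n : nat) (Phi : n.-tuple {mpoly K[n]}).
Hypothesis hPhi : poly_automorphism Phi.

Lemma det_jacobian_automorphism : exists2 c, c != 0 & \det (jacobian Phi) = c%:MP.
Proof.
have [Psi [PhiPsi PsiPhi]] := hPhi.
have : (\det (jacobian Phi) \mPo Psi) * \det (jacobian Psi) = 1.
  rewrite -det_map_mx -det_mulmx jacobian_comp.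
  have -> : [tuple tnth Phi i \mPo Psi | i < n] = [tuple 'X_i | i < n].
    by apply: eq_from_tnth => i; rewrite !tnth_mktuple PhiPsi.
  by rewrite jacobian_id det1.
case/mpoly_mul_eq1 => c c0 detc; exists c => //.
by rewrite -(comp_mpolyK PsiPhi (\det (jacobian Phi))) detc comp_mpolyC.
Qed.

Lemma automorphism_comp_eq0 p : (p \mPo Phi == 0) = (p == 0).
Proof.
have [Psi [PhiPsi _]] := hPhi.
apply/eqP/eqP => [p0|->]; last exact: comp_mpoly0.
by rewrite -(comp_mpolyK PhiPsi p) p0 comp_mpoly0.
Qed.

Lemma deg1_automorphism_gt0 i : (0 < deg1 (tnth Phi i))%N.
Proof.
have [Psi [PhiPsi _]] := hPhi.
rewrite lt0n; apply/negP => /eqP fi0.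
have /msize1_polyC fiC : (msize (tnth Phi i) <= 1)%N by move: fi0; rewrite /deg1; lia.
have := congr1 (fun r => msize r) (PhiPsi i).
by rewrite fiC comp_mpolyC msizeC msizeX mdeg1; case: (_ != 0).
Qed.

End Automorphism.

Definition nabla (R : ringType) (n : nat) (Phi : n.-tuple {mpoly R[n]}) : int :=
  (\sum_(i < n) deg1 (tnth Phi i))%:Z - n%:Z.

Section LastVariable.
Variables (K : idomainType) (n : nat) (Phi : n.+1.-tuple {mpoly K[n.+1]}).

Let S := (\sum_(i < n) (deg1 (tnth Phi (lift ord_max i))).-1)%N.

Lemma deg1_adj_jacobian_last j : (deg1 (\adj (jacobian Phi) j ord_max) <= S)%N.
Proof.
rewrite mxE /cofactor -signr_odd deg1_signr.
apply: deg1_sum_le => s _; rewrite deg1_signr.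
apply: leq_trans (deg1_prod_le _ _ _) _; apply: leq_sum => i _.
rewrite !mxE; exact: deg1_mderiv.
Qed.

Hypothesis hPhi : poly_automorphism Phi.

Lemma nabla_last : nabla Phi = (deg1 (tnth Phi ord_max))%:Z + S%:Z - 1.
Proof.
have dpos i := deg1_automorphism_gt0 hPhi i.
have predn_sum : (S + n = \sum_(i < n) deg1 (tnth Phi (lift ord_max i)))%N.
  rewrite /S -[X in (_ + X)%N]card_ord -sum1_card -big_split /=.
  by apply: eq_bigr => i _; rewrite addn1 prednK.
rewrite /nabla (bigD1_ord ord_max) //= -predn_sum; lia.
Qed.

Lemma deg1_mderiv_last_comp_le (P : {mpoly K[n.+1]}) :
  P^`M(ord_max) \mPo Phi != 0 ->
  ((deg1 (P^`M(ord_max) \mPo Phi)).+1 <= deg1 (P \mPo Phi) + S)%N.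
Proof.
set Q := P \mPo Phi; set g := P^`M(ord_max) \mPo Phi => g0.
have [c c0 detc] := det_jacobian_automorphism hPhi.
have cramer := det_jacobian_mul_mderiv_comp Phi P ord_max.
rewrite detc -/Q -/g in cramer.
have Q_nonconst : (0 < deg1 Q)%N.
  rewrite lt0n; apply: contra g0 => /eqP Q0.
  have : c%:MP * g == 0.
    by rewrite cramer big1 // => j _; rewrite deg1_eq0_mderiv // mul0r.
  by rewrite mulf_eq0 mpolyC_eq0 (negbTE c0).
have : (deg1 (c%:MP * g) <= (deg1 Q).-1 + S)%N.
  rewrite cramer; apply: deg1_sum_le => j _.
  apply: leq_trans (deg1M_le _ _) _.
  exact: leq_add (deg1_mderiv _ _) (deg1_adj_jacobian_last j).
by rewrite deg1_mulC //; move: Q_nonconst; move: (deg1 Q) (deg1 g) => a b; lia.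
Qed.

End LastVariable.

Theorem mainTheorem13 (K : closedFieldType) (n : nat)
  (charK : [pchar K] =i pred0)
  (Phi : n.+1.-tuple {mpoly K[n.+1]})
  (hPhi : poly_automorphism Phi)
  (P : {mpoly K[n.+1]}) (k : nat) :
  let d := fun i : 'I_n.+1 => deg1 (tnth Phi i) in
  let nabla : int := (\sum_(i < n.+1) d i)%:Z - n.+1%:Z in
  (P^`M(ord_max, k) \mPo Phi) != 0 ->
  (deg1 (P \mPo Phi))%:Z >=
    (deg1 (P^`M(ord_max, k) \mPo Phi))%:Z + (k * d ord_max)%:Z - k%:Z * nabla.
Proof.
rewrite /= -/(nabla Phi) nabla_last //.
set dn := deg1 (tnth Phi ord_max); set S := (\sum_(i < n) _)%N.
elim: k => [|k IH]; first by rewrite mderivn0 mul0n mul0r addr0 subr0.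
rewrite mderivnS => Pk1_0.
have Pk0 : P^`M(ord_max, k) \mPo Phi != 0.
  apply: contra Pk1_0; rewrite !automorphism_comp_eq0 // => /eqP ->.
  by rewrite mderiv0.
have := deg1_mderiv_last_comp_le hPhi Pk1_0; have := IH Pk0.
rewrite -/S mulSn PoszD intS mulrDl mul1r.
set X := (k%:Z * _); set Y := (k * dn)%N.
move: (deg1 (P \mPo Phi)) (deg1 (P^`M(ord_max, k) \mPo Phi)).
by move: (deg1 (_^`M(ord_max) \mPo Phi)) => c a b; lia.
Qed.
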